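(* Let $q$ be a nonzero scalar and let $\mathcal A$ be an associative unital algebra over a field containing $q$, with elements $\psi,\chi$ and an invertible element $\Phi$ (standing for $q^{\phi/2}$) satisfying $$\Phi\psi=q\,\psi\Phi,\qquad \Phi\chi=q\,\chi\Phi,\qquad \psi\chi=\chi\psi.$$ Set $B=\Phi+\psi\Phi^{-1}\chi$ (standing for $q^{\beta/2}$) and assume $B$ is invertible; define $$\alpha=\Phi^{-1}\chi\Phi^{-1}\big(1+\psi\Phi^{-1}\chi\Phi^{-1}\big)^{-1},\qquad \gamma=\big(1+\Phi^{-1}\psi\Phi^{-1}\chi\big)^{-1}\Phi^{-1}\psi\Phi^{-1}$$ (so that $\alpha=\Phi^{-1}\chi B^{-1}$ and $\gamma=B^{-1}\psi\Phi^{-1}$, i.e. $B\gamma=\psi\Phi^{-1}$ and $\alpha B=\Phi^{-1}\chi$). Then $$\alpha B\gamma+B^{-1}=\Phi^{-1},$$ and $$B^2\alpha=q^2\alpha B^2,\qquad B^2\gamma=q^2\gamma B^2,\qquad \alpha\gamma=\gamma\alpha.$$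
   Context: Interpretation: these formulas equate, in the fundamental representation of $SL_q(2)$, the matrices $\begin{pmatrix} q^{\phi/2}+\psi q^{-\phi/2}\chi & \psi q^{-\phi/2}\\ q^{-\phi/2}\chi & q^{-\phi/2}\end{pmatrix}$ and $\begin{pmatrix} q^{\beta/2} & q^{\beta/2}\gamma\\ \alpha q^{\beta/2} & \alpha q^{\beta/2}\gamma+q^{-\beta/2}\end{pmatrix}$; here $\Phi=q^{\phi/2}$, $B=q^{\beta/2}$, and $B^2=q^{\beta}$. The relation $\Phi\psi=q\psi\Phi$ is the square-root form of $q^{\phi}\psi=q^2\psi q^{\phi}$. *)

From HB Require Import structures.
From mathcomp Require Import all_boot all_order all_algebra.
Set Implicit Arguments. Unset Strict Implicit. Unset Printing Implicit Defensive.

(* With X := Phi^-1 chi and Y := psi Phi^-1 one has alpha = X B^-1 and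
   gamma = B^-1 Y.  Writing B = Phi + psi X = Phi + Y chi shows that B
   q-commutes with X and with Y (B X = q X B, B Y = q Y B), while X and Y
   commute.  The four identities follow by moving B and B^-1 across X and Y. *)

From HB Require Import structures.
From mathcomp Require Import all_boot all_order all_algebra.
Import GRing.Theory.
Local Open Scope ring_scope.
Set Implicit Arguments.
Unset Strict Implicit.

Section QCommute.
Variables (R : comNzRingType) (A : unitAlgType R).

Definition qcommute (q : R) (a b : A) := a * b = q *: (b * a).

Lemma qcommute1 (a b : A) : GRing.comm a b -> qcommute 1 a b.
Proof. by rewrite /qcommute scale1r. Qed.

Lemma qcommuteDl (q : R) (a b c : A) :
  qcommute q a c -> qcommute q b c -> qcommute q (a + b) c.
Proof. by rewrite /qcommute mulrDl mulrDr scalerDr => -> ->. Qed.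

Lemma qcommuteMl (p r : R) (a b c : A) :
  qcommute p a c -> qcommute r b c -> qcommute (p * r) (a * b) c.
Proof.
rewrite /qcommute => ac bc.
by rewrite -mulrA bc -scalerAr (mulrA a) ac -scalerAl scalerA mulrC mulrA.
Qed.

Lemma qcommuteMr (p r : R) (a b c : A) :
  qcommute p a b -> qcommute r a c -> qcommute (p * r) a (b * c).
Proof.
rewrite /qcommute => ab ac.
by rewrite mulrA ab -scalerAl -(mulrA b a) ac -scalerAr scalerA mulrA.
Qed.

Lemma qcommuteXl (q : R) (a b : A) n :
  qcommute q a b -> qcommute (q ^+ n) (a ^+ n) b.
Proof.
move=> ab; elim: n => [|n IHn]; first exact/qcommute1/commr_sym/commr1.
by rewrite exprS [a ^+ _]exprS; apply: qcommuteMl.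
Qed.

Variable a : A.
Hypothesis a_unit : a \is a GRing.unit.

Lemma qcommuteVr (q : R) (b : A) : qcommute q a b -> qcommute q b a^-1.
Proof.
move=> ab; rewrite /qcommute.
have -> : b * a^-1 = a^-1 * (a * b) * a^-1 by rewrite mulKr.
by rewrite ab -scalerAr -scalerAl !mulrA mulrK.
Qed.

Lemma qcommute_conj (q : R) (b : A) : qcommute q a b -> a * b * a^-1 = q *: b.
Proof. by move=> ab; rewrite ab -scalerAl mulrK. Qed.

Lemma qcommute_conjV (q : R) (b : A) : qcommute q a b -> q *: (a^-1 * b * a) = b.
Proof. by move=> ab; rewrite -mulrA scalerAr -ab mulKr. Qed.

Lemma qcommute_commute_div (q : R) (x y : A) :
    qcommute q a x -> qcommute q a y -> GRing.comm x y ->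
  GRing.comm (x / a) (a^-1 * y).
Proof.
move=> ax ay xy; apply: (mulrI a_unit); apply: (mulIr a_unit).
have -> : a * (x / a * (a^-1 * y)) * a = (a * x / a) * (a^-1 * y * a).
  by rewrite !mulrA.
have -> : a * (a^-1 * y * (x / a)) * a = y * x.
  by rewrite !mulrA mulrV // mul1r mulrVK.
by rewrite (qcommute_conj ax) -scalerAl scalerAr (qcommute_conjV ay).
Qed.

End QCommute.

Section Generators.
Variables (R : comNzRingType) (A : unitAlgType R) (q : R) (psi chi Phi : A).
Hypotheses (Phi_unit : Phi \is a GRing.unit)
    (Phi_psi : qcommute q Phi psi) (Phi_chi : qcommute q Phi chi)
    (psi_chi : GRing.comm psi chi).

Let B := Phi + psi * Phi^-1 * chi.
Let X := Phi^-1 * chi.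
Let Y := psi * Phi^-1.

Lemma psi_X : qcommute q psi X.
Proof.
rewrite -[q]mulr1; apply: qcommuteMr; last exact: qcommute1.
exact: qcommuteVr.
Qed.

Lemma chi_Y : qcommute q chi Y.
Proof.
rewrite -[q]mul1r; apply: qcommuteMr; first exact/qcommute1/commr_sym.
exact: qcommuteVr.
Qed.

Lemma B_X : qcommute q B X.
Proof.
rewrite /B -mulrA; apply: qcommuteDl.
  by rewrite -[q]mul1r; apply: qcommuteMr => //; apply/qcommute1/commrV.
by rewrite -[q]mulr1; apply: qcommuteMl; [exact: psi_X | exact/qcommute1].
Qed.

Lemma B_Y : qcommute q B Y.
Proof.
rewrite /B; apply: qcommuteDl.
  by rewrite -[q]mulr1; apply: qcommuteMr => //; apply/qcommute1/commrV.
by rewrite -[q]mul1r; apply: qcommuteMl; [exact/qcommute1 | exact: chi_Y].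
Qed.

Lemma X_Y : GRing.comm X Y.
Proof.
have chi_PhiV : chi * Phi^-1 = q *: (Phi^-1 * chi) by apply: qcommuteVr.
have psi_PhiV : psi * Phi^-1 = q *: (Phi^-1 * psi) by apply: qcommuteVr.
rewrite /GRing.comm /X /Y [LHS]mulrA -[Phi^-1 * chi * psi]mulrA -psi_chi.
by rewrite -mulrA -(mulrA psi) chi_PhiV -!scalerAr mulrA scalerAl -psi_PhiV.
Qed.

Lemma B_PhiV : B / Phi = 1 + q *: (X * Y).
Proof.
have chi_PhiV : chi * Phi^-1 = q *: X by apply: qcommuteVr.
by rewrite /B mulrDl divrr // -mulrA chi_PhiV -scalerAr X_Y.
Qed.

Hypothesis B_unit : B \is a GRing.unit.

Lemma alphaE : Phi^-1 * chi * Phi^-1 * (1 + psi * Phi^-1 * chi * Phi^-1)^-1 = X / B.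
Proof.
have -> : 1 + psi * Phi^-1 * chi * Phi^-1 = B / Phi by rewrite /B mulrDl divrr.
by rewrite invrM ?unitrV // invrK !mulrA mulrVK.
Qed.

Lemma gammaE : (1 + Phi^-1 * psi * Phi^-1 * chi)^-1 * Phi^-1 * psi * Phi^-1 = B^-1 * Y.
Proof.
have -> : 1 + Phi^-1 * psi * Phi^-1 * chi = Phi^-1 * B by rewrite /B mulrDr mulVr // !mulrA.
by rewrite invrM ?unitrV // invrK mulrK // /Y mulrA.
Qed.

Lemma alpha_B_gamma : X / B * B * (B^-1 * Y) + B^-1 = Phi^-1.
Proof.
apply: (mulrI B_unit); rewrite mulrDr divrr // mulrVK // B_PhiV addrC.
by rewrite mulrA [_ * (B^-1 * Y)]mulrA (qcommute_conj B_unit B_X) -scalerAl.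
Qed.

End Generators.

Theorem mainTheorem2 (K : fieldType) (A : unitAlgType K) (q : K)
    (psi chi Phi : A)
    (hq : q != 0)
    (hPhi : Phi \is a GRing.unit)
    (hPhipsi : Phi * psi = q *: (psi * Phi))
    (hPhichi : Phi * chi = q *: (chi * Phi))
    (hpsichi : psi * chi = chi * psi)
    (hB : Phi + psi * Phi^-1 * chi \is a GRing.unit) :
  let B := Phi + psi * Phi^-1 * chi in
  let alpha := Phi^-1 * chi * Phi^-1 * (1 + psi * Phi^-1 * chi * Phi^-1)^-1 in
  let gamma := (1 + Phi^-1 * psi * Phi^-1 * chi)^-1 * Phi^-1 * psi * Phi^-1 in
  [/\ alpha * B * gamma + B^-1 = Phi^-1,
      B ^+ 2 * alpha = q ^+ 2 *: (alpha * B ^+ 2),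
      B ^+ 2 * gamma = q ^+ 2 *: (gamma * B ^+ 2)
    & alpha * gamma = gamma * alpha].
Proof.
move=> B alpha gamma; rewrite {}/alpha {}/gamma alphaE // gammaE //.
have BX := B_X hPhi hPhipsi hPhichi hpsichi.
have BY := B_Y hPhi hPhipsi hPhichi hpsichi.
have B2_BV : qcommute 1 (B ^+ 2) B^-1 by apply/qcommute1/commr_sym/commrX/commr_sym/commrV.
split.
- exact: alpha_B_gamma hPhi hPhipsi hPhichi hpsichi hB.
- by rewrite -[q ^+ 2]mulr1; apply: qcommuteMr => //; apply: qcommuteXl.
- by rewrite -[q ^+ 2]mul1r; apply: qcommuteMr => //; apply: qcommuteXl.
- exact: qcommute_commute_div BX BY (X_Y hPhi hPhipsi hPhichi hpsichi).
Qed.
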